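(* Let $V$ be a finite nonempty set of voters, $A$ a finite set of alternatives, and $F:\mathcal{P}(V,A)\to S_2(A)$ a consular election rule whose range graph $\mathcal{G}(F)$ satisfies edge-connectivity. Then for every linear order $L$ on $A$ there is a unique favourite committee of $L$ in the range of $F$.
   Context: $S_2(A)$ is the set of 2-element subsets of $A$; a consular election rule maps each profile (a linear order on $A$ for each voter) to an element of $S_2(A)$. The range graph $\mathcal{G}(F)$ has vertex set $A$ and edge set equal to the range of $F$. A graph satisfies edge-connectivity if whenever $\{a,b\}$ and $\{c,d\}$ are edges with $a,b,c,d$ pairwise distinct, then $\{a,c\}$ or $\{a,d\}$ is an edge, and $\{b,c\}$ or $\{b,d\}$ is an edge. For a linear order $L$ on $A$ and $X,Y\in S_2(A)$: $X\succeq^O Y$ iff the $L$-best element of $X$ is weakly $L$-above the $L$-best element of $Y$; $X\succeq^P Y$ iff the $L$-worst element of $X$ is weakly $L$-above the $L$-worst element of $Y$. A favourite committee of $L$ in $\mathcal{X}\subseteq S_2(A)$ is an element of $\mathcal{X}$ maximal in $\mathcal{X}$ under both $\succeq^O$ and $\succeq^P$. *)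

From mathcomp Require Import all_boot.
Set Implicit Arguments. Unset Strict Implicit. Unset Printing Implicit Defensive.

(* A linear order on A, given by its (weak) relation "x is weakly below y": L x y. *)
Definition is_linorder (A : finType) (L : rel A) : Prop :=
  reflexive L /\ antisymmetric L /\ transitive L /\ total L.

Definition linorder (A : finType) := {L : rel A | is_linorder L}.

Definition profile (V A : finType) := V -> linorder A.

Definition is_pair (A : finType) (X : {set A}) : Prop := #|X| = 2.

Definition in_range (V A : finType) (F : profile V A -> {set A}) (X : {set A}) : Prop :=
  exists P, F P = X.

Definition edge_connected (A : finType) (E : {set A} -> Prop) : Prop :=
  forall a b c d : A, uniq [:: a; b; c; d] ->
    E [set a; b] -> E [set c; d] ->
    (E [set a; c] \/ E [set a; d]) /\ (E [set b; c] \/ E [set b; d]).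

Definition is_best (A : finType) (L : rel A) (X : {set A}) (x : A) : Prop :=
  x \in X /\ forall y, y \in X -> L y x.
Definition is_worst (A : finType) (L : rel A) (X : {set A}) (x : A) : Prop :=
  x \in X /\ forall y, y \in X -> L x y.

Definition succeqO (A : finType) (L : rel A) (X Y : {set A}) : Prop :=
  exists x y, is_best L X x /\ is_best L Y y /\ L y x.
Definition succeqP (A : finType) (L : rel A) (X Y : {set A}) : Prop :=
  exists x y, is_worst L X x /\ is_worst L Y y /\ L y x.

Definition maximal_in (A : finType) (R : {set A} -> {set A} -> Prop)
    (Xs : {set A} -> Prop) (X : {set A}) : Prop :=
  Xs X /\ forall Y, Xs Y -> R Y X -> R X Y.

Definition favourite_committee (A : finType) (L : rel A)
    (Xs : {set A} -> Prop) (X : {set A}) : Prop :=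
  maximal_in (succeqO L) Xs X /\ maximal_in (succeqP L) Xs X.

(** Order the edges of the range graph by their top and by their bottom
    element. Let [b] be the highest top of an edge and [w] the highest bottom.
    If edges [{b, x}] and [{u, w}] share no vertex, edge-connectivity yields
    [{b, u}] or [{b, w}]; the first would have the bottom [u] above [w], so
    [{b, w}] is an edge. It dominates every edge for both comparisons, and any
    committee that is maximal for both must have top [b] and bottom [w]. *)

From Stdlib Require Import ClassicalEpsilon.
From mathcomp Require Import all_boot.
Set Implicit Arguments. Unset Strict Implicit.

Lemma exists_argmax (T : finType) (P : T -> Prop) (f : T -> nat) :
  (exists t, P t) -> exists2 t, P t & forall s, P s -> f s <= f t.
Proof.
case=> t0 Pt0.
pose Pb t : bool := if excluded_middle_informative (P t) then true else false.
have PbP t : reflect (P t) (Pb t).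
  by rewrite /Pb; case: excluded_middle_informative => ?; constructor.
case: (@arg_maxnP _ t0 Pb f (introT (PbP t0) Pt0)) => t /PbP Pt max_t.
by exists t => // s /PbP; apply: max_t.
Qed.

Lemma enum_rank_linorder (A : finType) :
  is_linorder (fun x y : A => enum_rank x <= enum_rank y).
Proof.
split; first by move=> x; apply: leqnn.
split; first by move=> x y /anti_leq /val_inj /enum_rank_inj.
by split=> [y x z|x y]; [apply: leq_trans | apply: leq_total].
Qed.

Section LinearOrder.

Variables (A : finType) (L : rel A).
Hypothesis L_linorder : is_linorder L.

Let L_refl : reflexive L := L_linorder.1.
Let L_trans : transitive L := L_linorder.2.2.1.
Let L_total : total L := L_linorder.2.2.2.

Lemma L_anti x y : L x y -> L y x -> x = y.
Proof. by move=> Lxy Lyx; apply: L_linorder.2.1; rewrite Lxy Lyx. Qed.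

Definition rank (x : A) := #|[set y | L y x]|.

Lemma leq_rank x y : (rank x <= rank y) = L x y.
Proof.
apply/idP/idP=> [|Lxy]; last first.
  by apply/subset_leq_card/subsetP=> z; rewrite !inE => /L_trans; apply.
apply: contraTT => nLxy; rewrite -ltnNge; apply: proper_card.
have Lyx : L y x by case/orP: (L_total x y) => // Lxy; rewrite Lxy in nLxy.
apply/properP; split.
  by apply/subsetP=> z; rewrite !inE => /L_trans; apply.
by exists x; rewrite !inE // L_refl.
Qed.

Lemma exists_Lmax (T : finType) (P : T -> Prop) (g : T -> A) :
  (exists t, P t) -> exists2 t, P t & forall s, P s -> L (g s) (g t).
Proof.
move=> /(exists_argmax (rank \o g)) [t Pt max_t].
by exists t => // s /max_t; rewrite leq_rank.
Qed.

Lemma pair_best x y : L y x -> is_best L [set x; y] x.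
Proof.
by move=> Lyx; split=> [|z]; rewrite !inE ?eqxx // => /orP[] /eqP ->.
Qed.

Lemma pair_worst x y : L y x -> is_worst L [set x; y] y.
Proof.
by move=> Lyx; split=> [|z]; rewrite !inE ?eqxx ?orbT // => /orP[] /eqP ->.
Qed.

Lemma best_uniq X x x' : is_best L X x -> is_best L X x' -> x = x'.
Proof.
by move=> [Xx maxx] [Xx' maxx']; apply: L_anti; [apply: maxx'|apply: maxx].
Qed.

Lemma worst_uniq X x x' : is_worst L X x -> is_worst L X x' -> x = x'.
Proof.
by move=> [Xx minx] [Xx' minx']; apply: L_anti; [apply: minx|apply: minx'].
Qed.

Lemma succeqO_pair x y x' y' : L y x -> L y' x' ->
  succeqO L [set x; y] [set x'; y'] <-> L x' x.
Proof.
move=> Lyx Ly'x'; split=> [[z [z' [bz [bz' Lz'z]]]]|Lx'x].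
  by rewrite (best_uniq (pair_best Lyx) bz) (best_uniq (pair_best Ly'x') bz').
by exists x, x'; split; [|split]; [exact: pair_best|exact: pair_best|].
Qed.

Lemma succeqP_pair x y x' y' : L y x -> L y' x' ->
  succeqP L [set x; y] [set x'; y'] <-> L y' y.
Proof.
move=> Lyx Ly'x'; split=> [[z [z' [wz [wz' Lz'z]]]]|Ly'y].
  rewrite (worst_uniq (pair_worst Lyx) wz).
  by rewrite (worst_uniq (pair_worst Ly'x') wz').
by exists y, y'; split; [|split]; [exact: pair_worst|exact: pair_worst|].
Qed.

Lemma card2_sorted_pair (X : {set A}) :
  #|X| = 2 -> exists x y, L y x /\ X = [set x; y].
Proof.
move=> /eqP /cards2P [x [y [_ ->]]].
case/orP: (L_total x y) => Lxy; last by exists x, y.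
by exists y, x; rewrite setUC.
Qed.

Section EdgeFamily.

Variable E : {set A} -> Prop.
Hypothesis E_pair : forall X, E X -> #|X| = 2.
Hypothesis E_edge_connected : edge_connected E.
Hypothesis E_nonempty : exists X, E X.

Definition arc (p : A * A) := E [set p.1; p.2] /\ L p.2 p.1.

Lemma arc_neq x y : arc (x, y) -> x != y.
Proof.
case=> /E_pair card2 _; apply/eqP=> exy.
by move: card2; rewrite /= exy setUid cards1.
Qed.

Lemma E_arc X : E X -> exists x y, arc (x, y) /\ X = [set x; y].
Proof.
move=> EX; have [x [y [Lyx eX]]] := card2_sorted_pair (E_pair EX).
by exists x, y; rewrite /arc /= -eX.
Qed.

Lemma exists_arc : exists p, arc p.
Proof. by case: E_nonempty => X /E_arc [x [y [axy _]]]; exists (x, y). Qed.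

Lemma arc_highest_top_bottom :
  exists b w, arc (b, w) /\ forall x y, arc (x, y) -> L x b /\ L y w.
Proof.
have [[b x] a_bx max_b] := exists_Lmax fst exists_arc.
have [[u w] a_uw max_w] := exists_Lmax snd exists_arc.
exists b, w; split=> [|x' y' a']; last first.
  by split; [apply: (max_b (x', y')) | apply: (max_w (x', y'))].
have Lub : L u b by apply: (max_b (u, w)).
have [E_uw Lwu] := a_uw; have nuw := arc_neq a_uw.
have not_L_uw : ~~ L u w.
  by apply: contraNN nuw => Luw; rewrite (L_anti Luw Lwu).
split; last exact: L_trans Lub.
case: (eqVneq x w) => [<-|nxw]; first exact: a_bx.1.
case: (eqVneq b u) => [->|nbu]; first exact: E_uw.
have Lxw : L x w by apply: (max_w (b, x)).
have nbw : b != w by apply: contraNneq not_L_uw => ebw; rewrite -ebw.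
have nxu : x != u by apply: contraNneq not_L_uw => <-.
have uniq_bxuw : uniq [:: b; x; u; w].
  by rewrite /= !inE !negb_or (arc_neq a_bx) nbu nbw nxu nxw nuw.
have [[E_bu|//] _] := E_edge_connected uniq_bxuw a_bx.1 E_uw.
by have := max_w (b, u) (conj E_bu Lub); rewrite (negbTE not_L_uw).
Qed.

Lemma exists_unique_favourite_committee : exists! X, favourite_committee L E X.
Proof.
have [b [w [[E_bw Lwb] max_bw]]] := arc_highest_top_bottom.
exists [set b; w]; split.
  split; split=> // Y /E_arc [y1 [y2 [a_y ->]]] _;
    have [Ly1b Ly2w] := max_bw _ _ a_y.
    exact/(succeqO_pair Lwb a_y.2).
  exact/(succeqP_pair Lwb a_y.2).
move=> X [[/E_arc [x [y [a_xy ->]]] maxO] [_ maxP]].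
have [Lxb Lyw] := max_bw _ _ a_xy; have Lyx := a_xy.2.
have /(succeqO_pair Lyx Lwb) Lbx :=
  maxO _ E_bw (iffRL (succeqO_pair Lwb Lyx) Lxb).
have /(succeqP_pair Lyx Lwb) Lwy :=
  maxP _ E_bw (iffRL (succeqP_pair Lwb Lyx) Lyw).
by rewrite (L_anti Lxb Lbx) (L_anti Lyw Lwy).
Qed.

End EdgeFamily.

End LinearOrder.

Theorem proposition34 (V A : finType) (F : profile V A -> {set A}) :
  0 < #|V| ->
  (forall P, is_pair (F P)) ->
  edge_connected (in_range F) ->
  forall L : rel A, is_linorder L ->
    exists! X : {set A}, favourite_committee L (in_range F) X.
Proof.
move=> _ F_pair F_edge_connected L L_linorder.
apply: exists_unique_favourite_committee => //.
  by move=> X [P <-]; apply: F_pair.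
pose P0 : profile V A := fun=> exist _ _ (enum_rank_linorder A).
by exists (F P0), P0.
Qed.
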